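(* Let $M = \{ y = \psi(x) \}\subset\mathbb C^n$ be a $\mathcal C^2$-smooth graph at the origin (so $\psi(0)=0$) with $d\psi(0) = 0$. Then for any open set $U$ containing the origin, there exists a holomorphic embedding $\phi \colon \triangle^{n} \to U$ with $0\in\phi(\triangle^n)$ and $\phi(H^1)\cap M=\emptyset$.
   Context: Coordinates on $\mathbb C^n$ are $z=x+iy$ with $x,y\in\mathbb R^n$, and $\psi$ is defined near $0\in\mathbb R^n$ with values in $\mathbb R^n$. $\triangle$ is the open unit disc, $G^{k}(r,s):=s\triangle^{k}\setminus r\overline\triangle^{k}$, and $H^1:=(\triangle\times G^{n-1}(1/2,1))\cup(\tfrac12\triangle\times\triangle^{n-1})$ is the standard $1$-Hartogs figure. *)

From HB Require Import structures.
From mathcomp Require Import all_boot all_order all_algebra.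
From mathcomp Require Import all_classical all_reals all_analysis.
From mathcomp Require Import complex.
Unset Printing Implicit Defensive.
Import Order.TTheory GRing.Theory Num.Theory ComplexField numFieldNormedType.Exports.
Local Open Scope classical_set_scope.
Local Open Scope ring_scope.

(* C^n as row vectors over C = R[i], with C seen as a numFieldType so that
   the normed/topological structure of MathComp-Analysis applies. *)
Notation Cvec R n := ('rV[(complex (Real.sort R) : numFieldType)]_n).

Section Defs.
Variable R : realType.
Local Notation C := (complex (Real.sort R) : numFieldType).

Definition reC {n} (z : 'rV[C]_n) : 'rV[R]_n := map_mx (@complex.Re R) z.
Definition imC {n} (z : 'rV[C]_n) : 'rV[R]_n := map_mx (@complex.Im R) z.

Definition polydisc n (s : C) : set 'rV[C]_n :=
  [set z | forall k : 'I_n, `|z ord0 k| < s].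
Definition cpolydisc n (r : C) : set 'rV[C]_n :=
  [set z | forall k : 'I_n, `|z ord0 k| <= r].
Definition Gshell n (r s : C) : set 'rV[C]_n :=
  polydisc n s `\` cpolydisc n r.

Definition first_coord {n} (z : 'rV[C]_n) : C :=
  \big[+%R/0]_(k < n | val k == 0%N) z ord0 k.
Definition rest_coords {n} (z : 'rV[C]_n) : 'rV[C]_n.-1 :=
  \row_(j < n.-1) (if insub (j.+1)%N is Some k then z ord0 k else 0).

Definition hartogs1 n : set 'rV[C]_n :=
  [set z | (`|first_coord z| < 1 /\ Gshell n.-1 2^-1 1 (rest_coords z))
        \/ (`|first_coord z| < 2^-1 /\ polydisc n.-1 1 (rest_coords z))].

Definition C2_on {n} (V : set 'rV[R]_n) (psi : 'rV[R]_n -> 'rV[R]_n) : Prop :=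
  (forall x, V x -> differentiable psi x) /\
  (forall (i : 'I_n) x, V x -> differentiable ('D_('e_i) psi) x) /\
  (forall (i j : 'I_n) x, V x ->
     {for x, continuous ('D_('e_j) ('D_('e_i) psi))}).

Definition graph_set {n} (V : set 'rV[R]_n) (psi : 'rV[R]_n -> 'rV[R]_n)
  : set 'rV[C]_n := [set z | V (reC z) /\ imC z = psi (reC z)].

(* phi is a holomorphic embedding of the open set D into C^n:
   phi is holomorphic (complex Frechet differentiable) on D, its complex
   differential is injective at every point of D, and phi is a homeomorphism
   of D onto its image (it has a left inverse on D that is continuous on
   phi(D)). *)
Definition holomorphic_embedding {n} (D : set 'rV[C]_n)
  (phi : 'rV[C]_n -> 'rV[C]_n) : Prop :=
  (forall z, D z -> differentiable phi z) /\
  (forall z, D z -> injective ('d phi z)) /\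
  (exists g : 'rV[C]_n -> 'rV[C]_n,
     (forall z, D z -> g (phi z) = z) /\ {within phi @` D, continuous g}).

End Defs.
Arguments reC {R n} z.
Arguments imC {R n} z.
Arguments polydisc {R} n s.
Arguments cpolydisc {R} n r.
Arguments Gshell {R} n r s.
Arguments first_coord {R n} z.
Arguments rest_coords {R n} z.
Arguments hartogs1 {R} n.
Arguments C2_on {R n} V psi.
Arguments graph_set {R n} V psi.
Arguments holomorphic_embedding {R n} D phi.

From mathcomp Require Import all_boot all_order all_algebra.
From mathcomp Require Import all_classical all_reals all_analysis.
From mathcomp Require Import complex.
From mathcomp Require Import ring lra.
Import Order.TTheory GRing.Theory Num.Theory ComplexField numFieldNormedType.Exports.
Local Open Scope classical_set_scope.
Local Open Scope ring_scope.

(* The polynomial automorphism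
     F(z) = (i (3/4 - z_1 + 2 sum_(j >= 2) z_j^2), z_2, ..., z_n)
   of C^n pushes the Hartogs figure H^1 away from R^n. Indeed, if every
   coordinate of Im F(z) were at most 1/(16n), then Im z_j ~ 0 for j >= 2 and
   Re z_1 ~ 3/4 + 2 sum_(j >= 2) (Re z_j)^2; this is > 1/2 in general and > 1
   when some |z_j| > 1/2 (j >= 2), which excludes z from H^1. On the other
   hand, as M is tangent to R^n at 0, on a small ball the points of M satisfy
   |Im w| = |psi(Re w)| <= eta |Re w|. So for small e > 0 the map e F sends the
   unit polydisc into U and H^1 off M. *)

Section Embedding.
Context {R : realType} {n : nat}.
Local Notation C := (complex (Real.sort R) : numFieldType).

Lemma holomorphic_embedding_can (D : set 'rV[C]_n) (f g : 'rV[C]_n -> 'rV[C]_n) :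
  cancel f g -> (forall z, differentiable f z) -> (forall z, differentiable g z) ->
  holomorphic_embedding D f.
Proof.
move=> fK df dg; split; first by move=> z _; exact: df.
split.
  move=> z _ u v duv.
  have gf : g \o f = id by apply/funext => w /=.
  have did : 'd (@id 'rV[C]_n) z = id :> ('rV[C]_n -> 'rV[C]_n).
    exact: diff_val.
  have dgf : 'd g (f z) \o 'd f z = id.
    by have := diff_comp (df z) (dg (f z)); rewrite gf => <-.
  have := congr1 ('d g (f z)) duv.
  change (('d g (f z) \o 'd f z) u = ('d g (f z) \o 'd f z) v -> u = v).
  by rewrite dgf.
exists g; split => [z _ //|].
by apply: continuous_subspaceT => w; exact: differentiable_continuous.
Qed.
End Embedding.

Section MatrixNorm.
Context {K : realDomainType} {p q : nat}.
Implicit Type x : 'M[K]_(p, q).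

Lemma mx_norm_entry_le x i j : `|x i j| <= `|x|.
Proof.
rewrite [leRHS]/Num.norm /= mx_normrE.
exact: (le_bigmax _ (fun ij : 'I_p * 'I_q => `|x ij.1 ij.2|) (i, j)).
Qed.

Lemma mx_norm_le x b : 0 <= b -> (forall i j, `|x i j| <= b) -> `|x| <= b.
Proof.
move=> b_ge0 x_le; rewrite [leLHS]/Num.norm /= mx_normrE.
by apply: bigmax_le => // -[i j] _; exact: x_le.
Qed.

End MatrixNorm.

Section ComplexNorm.
Context {R : realType}.
Local Notation C := (complex (Real.sort R) : numFieldType).
Local Notation Re := (@complex.Re (Real.sort R)).
Local Notation Im := (@complex.Im (Real.sort R)).
Implicit Types (x : C) (b e : R).

Lemma normc_Re_le x b : `|x| <= b%:C%C -> `|Re x| <= b.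
Proof. by move=> xb; rewrite -lecR (le_trans (normc_ge_Re x)). Qed.

Lemma normc_Re_lt x b : `|x| < b%:C%C -> `|Re x| < b.
Proof. by move=> xb; rewrite -ltcR (le_lt_trans (normc_ge_Re x)). Qed.

Lemma normc_gt_sqr x b : 0 <= b -> b%:C%C < `|x| -> b ^+ 2 < Re x ^+ 2 + Im x ^+ 2.
Proof.
by move=> b_ge0 bx; rewrite -ltcR add_Re2_Im2 rmorphXn ltrXn2r // lecR.
Qed.

Lemma Im_realM e x : Im (e%:C%C * x) = e * Im x.
Proof. by case: x => a b /=; rewrite mul0r addr0. Qed.

Lemma real_complex_half : (2^-1 : C) = (2^-1 : R)%:C%C.
Proof. by rewrite fmorphV rmorph_nat. Qed.

End ComplexNorm.

Lemma differentiable_flat0 {R : realType} {V W : normedModType R} (f : V -> W) :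
  differentiable f 0 -> f 0 = 0 -> (forall v, 'd f 0 v = 0) ->
  forall eta, 0 < eta -> exists2 d, 0 < d & forall x, `|x| < d -> `|f x| <= eta * `|x|.
Proof.
move=> df f0 df0 eta eta_gt0.
have /eqaddoP /(_ eta eta_gt0) /nbhs_norm0P [d d_gt0 near0] := diff_locally df.
by exists d => // x /near0; rewrite !fctE /= addr0 f0 df0 add0r subr0.
Qed.

Lemma nbhs0_polydisc {R : realType} {n : nat} (U : set (Cvec R n)) :
  open U -> U 0 -> exists2 r : R, 0 < r & polydisc n r%:C%C `<=` U.
Proof.
move=> oU U0.
have [r r_gt0 rU] :
    exists2 r : complex (Real.sort R), 0 < r & ball (0 : Cvec R n) r `<=` U.
  have /nbhs_ballP [r ? ?] : nbhs (0 : Cvec R n) U by apply: open_nbhs_nbhs; split.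
  by exists r.
move: (r_gt0); rewrite ltcE => /andP[/eqP Im_r Re_r_gt0].
exists (complex.Re r) => // z zr; apply: rU; split => // i j.
rewrite (ord1 i) -ball_normE /= mxE sub0r normrN.
by case: r Im_r {r_gt0 Re_r_gt0} zr => a b /= -> /(_ j).
Qed.

Section HartogsMap.
Context {R : realType} {m : nat}.
Local Notation C := (complex (Real.sort R) : numFieldType).
Local Notation n := m.+1.
Local Notation Re := (@complex.Re (Real.sort R)).
Local Notation Im := (@complex.Im (Real.sort R)).
Implicit Types (z u : 'rV[C]_n).

Definition rest_sqr_sum z : C := \sum_(j < m) z ord0 (lift ord0 j) ^+ 2.

Definition hartogs_shift z : C :=
  'i%C * (3%:R / 4%:R - z ord0 ord0 + 2%:R * rest_sqr_sum z) - z ord0 ord0.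
Definition hartogs_map z : 'rV[C]_n := z + hartogs_shift z *: 'e_ord0.

Definition hartogs_unshift u : C :=
  3%:R / 4%:R + 2%:R * rest_sqr_sum u + 'i%C * u ord0 ord0 - u ord0 ord0.
Definition hartogs_map_inv u : 'rV[C]_n := u + hartogs_unshift u *: 'e_ord0.

Lemma add_e0_lift z (a : C) j :
  (z + a *: 'e_ord0) ord0 (lift ord0 j) = z ord0 (lift ord0 j).
Proof.
by rewrite !mxE [lift _ _ == _]eq_sym (negbTE (neq_lift _ _)) andbF mulr0 addr0.
Qed.

Lemma rest_sqr_sum_add_e0 z (a : C) :
  rest_sqr_sum (z + a *: 'e_ord0) = rest_sqr_sum z.
Proof. by apply: eq_bigr => j _; rewrite add_e0_lift. Qed.

Lemma hartogs_map0 z : hartogs_map z ord0 ord0 =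
  'i%C * (3%:R / 4%:R - z ord0 ord0 + 2%:R * rest_sqr_sum z).
Proof. by rewrite !mxE eqxx mulr1 addrC subrK. Qed.

Lemma hartogs_map_lift z j : hartogs_map z ord0 (lift ord0 j) = z ord0 (lift ord0 j).
Proof. exact: add_e0_lift. Qed.

Lemma hartogs_mapK : cancel hartogs_map hartogs_map_inv.
Proof.
move=> z; rewrite /hartogs_map_inv /hartogs_unshift rest_sqr_sum_add_e0.
rewrite hartogs_map0 -addrA -scalerDl /hartogs_shift.
apply/rowP => j; rewrite !mxE /=.
case: (eqVneq j ord0) => [->|_]; last by rewrite mulr0 addr0.
have ii : ('i%C : C) * 'i%C = -1 by rewrite -expr2 sqr_i.
rewrite mulr1; apply/eqP; rewrite -subr_eq0; apply/eqP.
transitivity ((('i%C : C) * 'i%C + 1) *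
              (3%:R / 4%:R - z ord0 ord0 + 2%:R * rest_sqr_sum z)); first by ring.
by rewrite ii addNr mul0r.
Qed.

Lemma differentiable_rest_sqr_sum z : differentiable rest_sqr_sum z.
Proof.
rewrite (_ : rest_sqr_sum =
             \sum_(j < m) (fun w : 'rV[C]_n => w ord0 (lift ord0 j)) ^+ 2).
  apply: differentiable_sum => j; apply: differentiableX.
  exact: differentiable_coord.
by apply/funext => w; rewrite fct_sumE; apply: eq_bigr => j _; rewrite exprfctE.
Qed.

Lemma hartogs_map_center : hartogs_map (3%:R / 4%:R *: 'e_ord0) = 0.
Proof.
have q0 : rest_sqr_sum (3%:R / 4%:R *: 'e_ord0 : 'rV[C]_n) = 0.
  rewrite -[_ *: _]add0r rest_sqr_sum_add_e0 /rest_sqr_sum big1 // => j _.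
  by rewrite mxE expr0n.
rewrite /hartogs_map /hartogs_shift q0 !mxE eqxx mulr1 mulr0 addr0 subrr mulr0.
by rewrite sub0r scaleNr subrr.
Qed.

Let coord0 := fun w : 'rV[C]_n => w ord0 ord0.

Let differentiable_coord0 z : differentiable coord0 z.
Proof. exact: differentiable_coord. Qed.

Lemma differentiable_hartogs_map z : differentiable hartogs_map z.
Proof.
have -> : hartogs_map = id + (fun w => hartogs_shift w *: 'e_ord0) by [].
apply: differentiableD => //; apply: differentiableZl.
have -> : hartogs_shift =
  cst 'i%C * (cst (3%:R / 4%:R) - coord0 + cst 2%:R * rest_sqr_sum) - coord0 by [].
apply: differentiableB; last exact: differentiable_coord0.
apply: differentiableM; first exact: differentiable_cst.
apply: differentiableD.
  by apply: differentiableB; [exact: differentiable_cst|exact: differentiable_coord0].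
by apply: differentiableM; [exact: differentiable_cst|exact: differentiable_rest_sqr_sum].
Qed.

Lemma differentiable_hartogs_map_inv z : differentiable hartogs_map_inv z.
Proof.
have -> : hartogs_map_inv = id + (fun w => hartogs_unshift w *: 'e_ord0) by [].
apply: differentiableD => //; apply: differentiableZl.
have -> : hartogs_unshift =
  cst (3%:R / 4%:R) + cst 2%:R * rest_sqr_sum + cst 'i%C * coord0 - coord0 by [].
apply: differentiableB; last exact: differentiable_coord0.
apply: differentiableD; last first.
  by apply: differentiableM; [exact: differentiable_cst|exact: differentiable_coord0].
apply: differentiableD; first exact: differentiable_cst.
by apply: differentiableM; [exact: differentiable_cst|exact: differentiable_rest_sqr_sum].
Qed.

Lemma first_coordE z : first_coord z = z ord0 ord0.
Proof. by rewrite /first_coord (big_pred1 ord0). Qed.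

Lemma rest_coordsE z j : rest_coords z ord0 j = z ord0 (lift ord0 j).
Proof.
rewrite /rest_coords mxE; case: insubP => [k _ kE|]; last by rewrite ltnS ltn_ord.
by congr (z ord0 _); apply/val_inj; rewrite kE.
Qed.

Lemma hartogs1_polydisc z : hartogs1 n z -> polydisc n 1 z.
Proof.
rewrite /hartogs1 /= first_coordE => Hz k.
have half_lt1 : (2^-1 : C) < 1 by rewrite invf_lt1 ?ltr0n ?ltr1n.
have rest1 : polydisc m 1 (rest_coords z) by case: Hz => [[_ []]|[]].
have z0_lt1 : `|z ord0 ord0| < 1.
  by case: Hz => [[]//|[z0_half _]]; exact: lt_trans z0_half half_lt1.
by case: (unliftP ord0 k) => [j ->|->] //; rewrite -rest_coordsE; exact: rest1.
Qed.

Lemma hartogs1_cases z : hartogs1 n z ->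
  `|z ord0 ord0| < 2^-1 \/ exists j, 2^-1 < `|z ord0 (lift ord0 j)|.
Proof.
rewrite /hartogs1 /= first_coordE => -[[_ [_ /existsNP [j]]]|[]]; last by left.
move=> /negP; rewrite -real_ltNge ?normr_real ?rpredV ?realn // => lt_half.
by right; exists j; rewrite -rest_coordsE.
Qed.

Lemma Re_sqr (x : C) : Re (x ^+ 2) = Re x ^+ 2 - Im x ^+ 2.
Proof. by case: x => a b; rewrite /= !expr2. Qed.

Lemma Re_rest_sqr_sum_ge z t : (forall j, `|Im (z ord0 (lift ord0 j))| <= t) ->
  \sum_(j < m) Re (z ord0 (lift ord0 j)) ^+ 2 - m%:R * t ^+ 2 <= Re (rest_sqr_sum z).
Proof.
move=> Im_le.
have -> : Re (rest_sqr_sum z) = \sum_(j < m) Re (z ord0 (lift ord0 j) ^+ 2).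
  exact: raddf_sum.
have -> : m%:R * t ^+ 2 = \sum_(j < m) t ^+ 2 by rewrite sumr_const card_ord mulr_natl.
rewrite -sumrB; apply: ler_sum => j _; rewrite Re_sqr lerD2l lerN2.
by have := Im_le j; rewrite ler_norml => /andP[? ?]; nra.
Qed.

Lemma Im_hartogs_map0 z : Im (hartogs_map z ord0 ord0) =
  3%:R / 4%:R - Re (z ord0 ord0) + 2 * Re (rest_sqr_sum z).
Proof.
rewrite hartogs_map0 mulrC ImiRe.
have -> : 3%:R / 4%:R = (3%:R / 4%:R : R)%:C%C :> C by rewrite fmorph_div !rmorph_nat.
have -> : 2%:R = (2 : R)%:C%C :> C by rewrite rmorph_nat.
by move: (z ord0 ord0) (rest_sqr_sum z) => [a b] [c d]; simpc.
Qed.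

Lemma norm_rest_sqr_sum_le z : polydisc n 1 z -> `|rest_sqr_sum z| <= m%:R.
Proof.
move=> z1; apply: le_trans (ler_norm_sum _ _ _) _.
rewrite -[m in m%:R]card_ord -sumr_const; apply: ler_sum => j _.
by rewrite normrX exprn_ile1 ?normr_ge0 // ltW // z1.
Qed.

Lemma norm_hartogs_map_le z j : polydisc n 1 z -> `|hartogs_map z ord0 j| <= 2 * n%:R.
Proof.
move=> z1; case: (unliftP ord0 j) => [k ->|->].
  by rewrite hartogs_map_lift (le_trans (ltW (z1 _))) // -natrM ler1n muln_gt0.
have norm_i : `|'i%C : C| = 1 by rewrite normc_def /= expr0n expr1n add0r sqrtr1.
have c_le1 : `|3%:R / 4%:R : C| <= 1.
  by rewrite ger0_norm ?divr_ge0 ?ler0n // ler_pdivrMr ?ltr0n // mul1r ler_nat.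
rewrite hartogs_map0 normrM norm_i mul1r -[m.+1%:R]natr1 mulrDr mulr1 addrC.
apply: le_trans (ler_normD _ _) _; apply: lerD.
  by rewrite normrM ger0_norm ?ler0n // ler_pM2l ?ltr0n // norm_rest_sqr_sum_le.
apply: le_trans (ler_normB _ _) _.
by rewrite -[2]/(1 + 1 : C) lerD // ltW // z1.
Qed.

Lemma hartogs_map_Im_gt z : hartogs1 n z ->
  exists j, (16 * n%:R)^-1 < `|Im (hartogs_map z ord0 j)|.
Proof.
move=> Hz; apply: contrapT => /forallNP Im_small.
pose t : R := (16 * n%:R)^-1.
have Im_le j : `|Im (hartogs_map z ord0 j)| <= t by rewrite leNgt; exact/negP/Im_small.
have n_ge1 : 1 <= n%:R :> R by rewrite ler1n.
have tn : t * (16 * n%:R) = 1 by rewrite mulVf // gt_eqF // mulr_gt0 ?ltr0n.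
have t_gt0 : 0 < t by rewrite invr_gt0 mulr_gt0 ?ltr0n.
have mt2 : m%:R * t ^+ 2 <= t / 16.
  have : m%:R + 1 = n%:R :> R by rewrite natr1.
  have := ler0n R m; nra.
set S := \sum_(j < m) Re (z ord0 (lift ord0 j)) ^+ 2.
have Re_q : S - m%:R * t ^+ 2 <= Re (rest_sqr_sum z).
  by apply: Re_rest_sqr_sum_ge => j; rewrite -hartogs_map_lift.
have S_ge0 : 0 <= S by apply: sumr_ge0 => j _; exact: sqr_ge0.
have := Im_le ord0; rewrite Im_hartogs_map0 ler_norml => /andP[Im0_ge Im0_le].
have /ltr_normlW a0_lt1 := normc_Re_lt _ 1 (hartogs1_polydisc _ Hz ord0).
case: (hartogs1_cases _ Hz) => [|[k]]; rewrite real_complex_half.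
  move=> /normc_Re_lt /ltr_normlW a0_lt_half; nra.
have half_ge0 : 0 <= 2^-1 :> R by rewrite invr_ge0 ler0n.
move=> /(normc_gt_sqr _ _ half_ge0) zk_gt.
have := Im_le (lift ord0 k); rewrite hartogs_map_lift ler_norml => /andP[bk_ge bk_le].
have S_ge : Re (z ord0 (lift ord0 k)) ^+ 2 <= S.
  rewrite /S (bigD1 k) //= lerDl; apply: sumr_ge0 => j _; exact: sqr_ge0.
nra.
Qed.

End HartogsMap.

Section ScaledHartogsMap.
Context {R : realType} {m : nat}.
Local Notation C := (complex (Real.sort R) : numFieldType).
Local Notation n := m.+1.
Local Notation Im := (@complex.Im (Real.sort R)).
Variable e : R.
Hypothesis e_gt0 : 0 < e.

Definition scaled_hartogs_map (z : 'rV[C]_n) : 'rV[C]_n := e%:C%C *: hartogs_map z.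

Lemma scaled_hartogs_map_embedding (D : set 'rV[C]_n) :
  holomorphic_embedding D scaled_hartogs_map.
Proof.
have e_neq0 : e%:C%C != 0 :> C by rewrite fmorph_eq0 gt_eqF.
apply: (holomorphic_embedding_can D _ (fun w => hartogs_map_inv (e%:C%C^-1 *: w))).
- by move=> z; rewrite /scaled_hartogs_map scalerA mulVf // scale1r hartogs_mapK.
- by move=> z; apply: differentiableZ; exact: differentiable_hartogs_map.
- move=> w; apply: (differentiable_comp (f := e%:C%C^-1 *: id)).
    exact: differentiableZ.
  exact: differentiable_hartogs_map_inv.
Qed.

Lemma norm_scaled_hartogs_map_le z j : polydisc n 1 z ->
  `|scaled_hartogs_map z ord0 j| <= (2 * n%:R * e)%:C%C.
Proof.
move=> z1; rewrite mxE normrM gtr0_norm ?ltcR // mulrC rmorphM /=.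
by rewrite ler_pM2r ?ltcR // rmorphM !rmorph_nat norm_hartogs_map_le.
Qed.

Lemma scaled_hartogs_map_polydisc r : 2 * n%:R * e < r ->
  scaled_hartogs_map @` polydisc n 1 `<=` polydisc n r%:C%C.
Proof.
move=> e_lt_r _ [z z1 <-] j.
by apply: le_lt_trans (norm_scaled_hartogs_map_le _ _ z1) _; rewrite ltcR.
Qed.

Lemma scaled_hartogs_map_center : (scaled_hartogs_map @` polydisc n 1) 0.
Proof.
exists (3%:R / 4%:R *: 'e_ord0).
  move=> k; rewrite !mxE; case: (_ && _); rewrite /= ?mulr0n ?mulr0 ?normr0 ?ltr01 //.
  by rewrite mulr1n mulr1 ger0_norm ?divr_ge0 ?ler0n // ltr_pdivrMr ?ltr0n // mul1r ltr_nat.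
by rewrite /scaled_hartogs_map hartogs_map_center scaler0.
Qed.

Lemma scaled_hartogs_map_graph_disjoint
    (V : set 'rV[R]_n) (psi : 'rV[R]_n -> 'rV[R]_n) :
  (forall x, `|x| <= 2 * n%:R * e -> `|psi x| <= e / (16 * n%:R)) ->
  scaled_hartogs_map @` hartogs1 n `&` graph_set V psi = set0.
Proof.
move=> psi_small; rewrite -subset0 => _ [[z Hz <-] [_ Im_w]].
have [j Im_gt] := hartogs_map_Im_gt _ Hz.
have Re_w_le : `|reC (scaled_hartogs_map z)| <= 2 * n%:R * e.
  apply: mx_norm_le => [|i k]; first by rewrite !mulr_ge0 ?ler0n ?ltW.
  rewrite (ord1 i) mxE; apply: normc_Re_le.
  exact/norm_scaled_hartogs_map_le/hartogs1_polydisc.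
have := le_trans (mx_norm_entry_le _ ord0 j) (psi_small _ Re_w_le).
rewrite -Im_w mxE mxE Im_realM normrM gtr0_norm // ler_pM2l //.
by rewrite leNgt Im_gt.
Qed.

End ScaledHartogsMap.

Theorem lemma2p7 (R : realType) (n : nat) (n_ge1 : (1 <= n)%N)
  (V : set 'rV[R]_n) (psi : 'rV[R]_n -> 'rV[R]_n) :
  open V -> V 0 -> C2_on V psi -> psi 0 = 0 -> (forall v, 'd psi 0 v = 0) ->
  forall U : set (Cvec R n), open U -> U 0 ->
  exists phi : Cvec R n -> Cvec R n,
    [/\ holomorphic_embedding (polydisc n 1) phi,
        phi @` polydisc n 1 `<=` U,
        (phi @` polydisc n 1) 0
      & phi @` hartogs1 n `&` graph_set V psi = set0].
Proof.
case: n n_ge1 V psi => // m _ V psi _ V0 [dpsi _] psi0 dpsi0 U oU U0.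
pose N : R := m.+1%:R; have N_gt0 : 0 < N by rewrite ltr0n.
have [r r_gt0 rU] := nbhs0_polydisc _ oU U0.
have [|d d_gt0 psi_flat] :=
  differentiable_flat0 psi (dpsi 0 V0) psi0 dpsi0 (32 * N ^+ 2)^-1.
  by rewrite invr_gt0 mulr_gt0 ?exprn_gt0.
pose e := Num.min d r / (4 * N).
have e_gt0 : 0 < e by rewrite divr_gt0 ?mulr_gt0 // lt_min d_gt0.
have eN : 2 * N * e = Num.min d r / 2 by rewrite /e; field; rewrite gt_eqF.
have min_le_d : Num.min d r <= d by rewrite ge_min lexx.
have min_le_r : Num.min d r <= r by rewrite ge_min lexx orbT.
have min_gt0 : 0 < Num.min d r by rewrite lt_min d_gt0.
exists (scaled_hartogs_map e); split.
- exact: (scaled_hartogs_map_embedding _ e_gt0).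
- apply: subset_trans rU; apply: (scaled_hartogs_map_polydisc _ e_gt0).
  by rewrite -/N eN; lra.
- exact: scaled_hartogs_map_center.
apply: (scaled_hartogs_map_graph_disjoint _ e_gt0) => x x_le.
have x_lt_d : `|x| < d by apply: le_lt_trans x_le _; rewrite -/N eN; lra.
apply: le_trans (psi_flat _ x_lt_d) _.
apply: le_trans (ler_wpM2l _ x_le) _; first by rewrite invr_ge0 mulr_ge0 ?exprn_ge0 ?ltW.
rewrite -/N (_ : _ * _ = e / (16 * N)) //.
by field; rewrite gt_eqF.
Qed.
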